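(* Let $p\ge 1$, $n_1,\dots,n_p\ge 1$, $n=n_1+\dots+n_p$, and let $A\in\mathcal{B}'(p)$ (defined in the context), with diagonal blocks $A_{k,k}$ ($k=1,\dots,p$). Then: (1) $A\succeq 0$ if and only if $\phi(A)\succeq 0$ and $A_{k,k}\succeq 0$ for every $k\in\{1,\dots,p\}$. (2) $A\succ 0$ if and only if $\phi(A)\succ 0$ and $A_{k,k}\succ 0$ for every $k\in\{1,\dots,p\}$.
   Context: All matrices are real. $M\succeq 0$ means $M$ is symmetric positive semidefinite, $M\succ 0$ means symmetric positive definite. $J_{m}$ is the $m\times m$ matrix of ones and $J_{m,q}=\mathbf 1_m\mathbf 1_q^\top$ the $m\times q$ matrix of ones. For a square matrix $C$ of size $m$, $\overline{C}=m^{-2}\mathbf 1_m^\top C\mathbf 1_m$ denotes the average of its entries. Given block sizes $n_1,\dots,n_p$, index the rows/columns of an $n\times n$ matrix ($n=\sum n_k$) by groups $G_1,\dots,G_p$, where $G_1$ consists of the first $n_1$ indices, $G_2$ the next $n_2$, etc., and write the matrix in block form $A=(A_{k,\ell})_{1\le k,\ell\le p}$ with $A_{k,\ell}$ of size $n_k\times n_\ell$. $\mathcal{B}'(p)$ is the set of real symmetric $n\times n$ block matrices $A$ such that every off-diagonal block is constant, i.e. $A_{k,\ell}=c_{k,\ell}J_{n_k,n_\ell}$ for some real $c_{k,\ell}$ ($k\neq\ell$), and every diagonal block satisfies $A_{k,k}-\overline{A_{k,k}}\,J_{n_k}\succeq 0$. The block average map $\phi$ sends $A$ to the $p\times p$ matrix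 $[\phi(A)]_{k,\ell}=\frac{1}{n_kn_\ell}\sum_{i\in G_k,\,j\in G_\ell}A_{i,j}$. *)

From HB Require Import structures.
From mathcomp Require Import all_boot all_order all_algebra.
Set Implicit Arguments. Unset Strict Implicit. Unset Printing Implicit Defensive.
Import Order.TTheory GRing.Theory Num.Theory.
Local Open Scope ring_scope.

Definition psd (R : realFieldType) (m : nat) (M : 'M[R]_m) : Prop :=
  M^T = M /\ forall x : 'cV[R]_m, 0 <= (x^T *m M *m x) 0 0.

Definition pd (R : realFieldType) (m : nat) (M : 'M[R]_m) : Prop :=
  M^T = M /\ forall x : 'cV[R]_m, x != 0 -> 0 < (x^T *m M *m x) 0 0.

Definition ones (R : realFieldType) (m q : nat) : 'M[R]_(m, q) := const_mx 1.

Definition mx_avg (R : realFieldType) (m : nat) (C : 'M[R]_m) : R :=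
  (\sum_(i < m) \sum_(j < m) C i j) / (m * m)%:R.

(* The class B'(p) for block sizes nk : 'I_p -> nat; the n x n matrix is
   indexed by 'I_(\sum_k nk k), groups given by MathComp's block structure. *)
Definition inBp (R : realFieldType) (p : nat) (nk : 'I_p -> nat)
  (A : 'M[R]_(\sum_(k < p) nk k)) : Prop :=
  A^T = A /\
  (forall k l : 'I_p, k != l ->
     exists c : R, submxblock A k l = c *: ones R (nk k) (nk l)) /\
  (forall k : 'I_p,
     psd (submxblock A k k - mx_avg (submxblock A k k) *: ones R (nk k) (nk k))).

Definition blockavg (R : realFieldType) (p : nat) (nk : 'I_p -> nat)
  (A : 'M[R]_(\sum_(k < p) nk k)) : 'M[R]_p :=
  \matrix_(k, l) ((\sum_(i < nk k) \sum_(j < nk l) submxblock A k l i j)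
                   / (nk k * nk l)%:R).

From HB Require Import structures.
From mathcomp Require Import all_boot all_order all_algebra.
From mathcomp Require Import ring lra.
Import Order.TTheory GRing.Theory Num.Theory.
Local Open Scope ring_scope.
Set Implicit Arguments. Unset Strict Implicit.

(* Writing x_k for the k-th block of x, s_k for the sum of its entries and
   D_k := A_kk - phi(A)_kk J for the centered diagonal blocks, the constant
   off-diagonal blocks give the identity
     x^T A x = \sum_k x_k^T D_k x_k + s^T phi(A) s,
   where every D_k is psd because A lies in B'(p).  Conversely phi(A) and the
   diagonal blocks are compressions of A: t^T phi(A) t is the value of the form
   of A at the vector constant equal to t_k / n_k on the k-th block, and
   y^T A_kk y its value at y placed in the k-th block.  For definiteness, if
   s = 0 some nonzero block x_k has zero sum, and then x_k^T D_k x_k equals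
   x_k^T A_kk x_k > 0. *)

Section BilinearForm.
Variable R : realFieldType.

Definition bform a b (u : 'cV[R]_a) (M : 'M[R]_(a, b)) (v : 'cV[R]_b) : R :=
  (u^T *m M *m v) 0 0.

Definition colsum a (u : 'cV[R]_a) : R := \sum_i u i 0.

Lemma bformE a b (u : 'cV_a) (M : 'M_(a, b)) (v : 'cV_b) :
  bform u M v = \sum_i \sum_j u i 0 * M i j * v j 0.
Proof.
rewrite /bform mxE exchange_big; apply: eq_bigr => j _; rewrite mxE mulr_suml.
by apply: eq_bigr => i _; rewrite !mxE.
Qed.

Lemma bformDm a b (u : 'cV_a) (M N : 'M_(a, b)) (v : 'cV_b) :
  bform u (M + N) v = bform u M v + bform u N v.
Proof. by rewrite /bform mulmxDr mulmxDl mxE. Qed.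

Lemma bformZ a b (c d : R) (u : 'cV_a) (M : 'M_(a, b)) (v : 'cV_b) :
  bform (c *: u) M (d *: v) = c * d * bform u M v.
Proof.
rewrite !bformE mulr_sumr; apply: eq_bigr => i _; rewrite mulr_sumr.
by apply: eq_bigr => j _; rewrite !mxE; ring.
Qed.

Lemma bform0l a b (M : 'M_(a, b)) (v : 'cV_b) : bform 0 M v = 0.
Proof. by rewrite /bform trmx0 !mul0mx mxE. Qed.

Lemma bform0r a b (u : 'cV_a) (M : 'M_(a, b)) : bform u M 0 = 0.
Proof. by rewrite /bform mulmx0 mxE. Qed.

Lemma bform_scale_ones a b (u : 'cV_a) (c : R) (v : 'cV_b) :
  bform u (c *: ones R a b) v = c * colsum u * colsum v.
Proof.
rewrite bformE /colsum -mulrA big_distrlr /= mulr_sumr; apply: eq_bigr => i _.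
rewrite mulr_sumr; apply: eq_bigr => j _; rewrite !mxE; ring.
Qed.

Lemma colsum_const_mx a (c : R) : colsum (const_mx c : 'cV_a) = c *+ a.
Proof. by rewrite /colsum; under eq_bigr do rewrite mxE; rewrite sumr_const card_ord. Qed.

Lemma avg_scale_ones a b (c : R) : (0 < a)%N -> (0 < b)%N ->
  (\sum_(i < a) \sum_(j < b) (c *: ones R a b) i j) / (a * b)%:R = c.
Proof.
move=> a_gt0 b_gt0; under eq_bigr do under eq_bigr do rewrite !mxE mulr1.
rewrite !sumr_const !card_ord -mulrnA [(b * a)%N]mulnC -[c *+ _]mulr_natr mulfK //.
by rewrite pnatr_eq0 -lt0n muln_gt0 a_gt0 b_gt0.
Qed.

End BilinearForm.

Section BlockMatrices.
Variables (R : realFieldType) (p : nat) (nk : 'I_p -> nat).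
Local Notation n := (\sum_(k < p) nk k).
Implicit Types (A : 'M[R]_n) (x : 'cV[R]_n).

Lemma bform_mxblock A x (y : 'cV_n) :
  bform x A y = \sum_k \sum_l bform (submxcol x k) (submxblock A k l) (submxcol y l).
Proof.
rewrite /bform -[in LHS](submxblockK A) -[in LHS](submxcolK x) -[in LHS](submxcolK y).
rewrite tr_mxcol mul_mxrow_mxblock mul_mxrow_mxcol summxE exchange_big.
by apply: eq_bigr => l _; rewrite mulmx_suml summxE.
Qed.

Lemma mxcol_neq0 x : x != 0 -> exists k, submxcol x k != 0.
Proof.
move=> x_neq0; apply/existsP; move: x_neq0; apply: contraR.
rewrite negb_exists => /forallP x0; apply/eqP/mxcolP => k.
by move: (x0 k); rewrite negbK => /eqP ->; apply/matrixP => i j; rewrite !mxE.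
Qed.

Lemma sym_blockavg A : A^T = A -> (blockavg A)^T = blockavg A.
Proof.
move=> symA; apply/matrixP => k l; rewrite !mxE mulnC exchange_big.
congr (_ / _); apply: eq_bigr => i _; apply: eq_bigr => j _.
by rewrite -{1}symA -tr_submxblock mxE.
Qed.

(* [conform_mx] only serves to cast [y] to the type of the [k]-th block. *)
Definition block_unit (k : 'I_p) (y : 'cV[R]_(nk k)) : 'cV[R]_n :=
  \mxcol_l (if l == k then conform_mx (0 : 'cV[R]_(nk l)) y else 0).

Lemma submxcol_block_unit k (y : 'cV_(nk k)) l :
  submxcol (block_unit y) l = if l == k then conform_mx 0 y else 0.
Proof. by rewrite /block_unit mxcolK. Qed.

Lemma submxcol_block_unit_id k (y : 'cV_(nk k)) : submxcol (block_unit y) k = y.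
Proof. by rewrite submxcol_block_unit eqxx conform_mx_id. Qed.

Lemma block_unit_eq0 k (y : 'cV_(nk k)) : (block_unit y == 0) = (y == 0).
Proof.
apply/eqP/eqP => [y0|->]; first by rewrite -(submxcol_block_unit_id y) y0 submxcol0.
apply/mxcolP => l; rewrite submxcol_block_unit submxcol0; case: ifP => // _.
by rewrite /conform_mx; do 2!case: eqP => // *; apply/matrixP => i j; rewrite castmxE !mxE.
Qed.

Lemma bform_block_unit A k (y : 'cV_(nk k)) :
  bform (block_unit y) A (block_unit y) = bform y (submxblock A k k) y.
Proof.
rewrite bform_mxblock (bigD1 k) //= [X in _ + X]big1 ?addr0; last first.
  by move=> i ik; apply: big1 => j _; rewrite submxcol_block_unit (negbTE ik) bform0l.
rewrite (bigD1 k) //= [X in _ + X]big1 ?addr0 ?submxcol_block_unit_id //.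
by move=> j jk; rewrite submxcol_block_unit (negbTE jk) bform0r.
Qed.

Lemma psd_submxblock_diag A k : psd A -> psd (submxblock A k k).
Proof.
move=> [symA psdA]; split; first by rewrite tr_submxblock symA.
by move=> y; have := psdA (block_unit y); rewrite -/(bform _ _ _) bform_block_unit.
Qed.

Lemma pd_submxblock_diag A k : pd A -> pd (submxblock A k k).
Proof.
move=> [symA pdA]; split; first by rewrite tr_submxblock symA.
move=> y y_neq0; have := pdA (block_unit y); rewrite block_unit_eq0.
by rewrite -/(bform _ _ _) bform_block_unit; apply.
Qed.

Section PositiveBlockSizes.
Hypothesis nk_gt0 : forall k, (0 < nk k)%N.

Lemma natr_nk_neq0 k : (nk k)%:R != 0 :> R.
Proof. by rewrite pnatr_eq0 -lt0n nk_gt0. Qed.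

Definition block_spread (t : 'cV[R]_p) : 'cV[R]_n :=
  \mxcol_k ((t k 0 / (nk k)%:R) *: (const_mx 1 : 'cV[R]_(nk k))).

Lemma colsum_block_spread t k : colsum (submxcol (block_spread t) k) = t k 0.
Proof.
rewrite /block_spread mxcolK /colsum; under eq_bigr do rewrite !mxE mulr1.
by rewrite sumr_const card_ord -[X in X = _]mulr_natr mulfVK // natr_nk_neq0.
Qed.

Lemma block_spread_eq0 t : (block_spread t == 0) = (t == 0).
Proof.
apply/eqP/eqP => [t0|->]; last first.
  by apply/mxcolP => k; rewrite mxcolK submxcol0 mxE mul0r scale0r.
apply/matrixP => k i; rewrite ord1 -colsum_block_spread t0 submxcol0 mxE.
by rewrite /colsum big1 // => j _; rewrite mxE.
Qed.

Definition centered_block A k : 'M[R]_(nk k) :=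
  submxblock A k k - blockavg A k k *: ones R (nk k) (nk k).

Lemma bform_centered_block A k (y : 'cV_(nk k)) :
  bform y (centered_block A k) y
  = bform y (submxblock A k k) y - blockavg A k k * colsum y * colsum y.
Proof. by rewrite /centered_block bformDm -scaleNr bform_scale_ones !mulNr. Qed.

Lemma bform_centered_block_const A k :
  bform (const_mx 1) (centered_block A k) (const_mx 1) = 0.
Proof.
rewrite bform_centered_block colsum_const_mx bformE [blockavg A k k]mxE.
move: (submxblock A k k) => B; under eq_bigr do under eq_bigr do rewrite !mxE mul1r mulr1.
rewrite natrM; field; exact: natr_nk_neq0.
Qed.

Section InBp.
Variable A : 'M[R]_n.
Hypothesis A_Bp : inBp A.

Lemma inBp_offdiag k l :
  k != l -> submxblock A k l = blockavg A k l *: ones R (nk k) (nk l).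
Proof.
move=> kl; have [c cE] := A_Bp.2.1 k l kl.
by rewrite [blockavg A k l]mxE cE avg_scale_ones.
Qed.

Lemma psd_centered_block k (y : 'cV_(nk k)) : 0 <= bform y (centered_block A k) y.
Proof. by rewrite /centered_block mxE; apply: (A_Bp.2.2 k).2. Qed.

Lemma bform_inBp x :
  bform x A x = \sum_k bform (submxcol x k) (centered_block A k) (submxcol x k)
    + bform (\col_k colsum (submxcol x k)) (blockavg A) (\col_k colsum (submxcol x k)).
Proof.
rewrite bform_mxblock bformE -big_split; apply: eq_bigr => k _ /=.
rewrite (bigD1 k) // [in RHS](bigD1 k) //= addrA; congr (_ + _).
  have -> : submxblock A k k = centered_block A k + blockavg A k k *: ones R _ _.
    by rewrite subrK.
  by rewrite bformDm bform_scale_ones !mxE; ring.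
apply: eq_big => // l kl.
by rewrite inBp_offdiag 1?eq_sym // bform_scale_ones !mxE; ring.
Qed.

Lemma bform_block_spread t :
  bform (block_spread t) A (block_spread t) = bform t (blockavg A) t.
Proof.
rewrite bform_inBp big1 ?add0r.
  by congr bform; apply/matrixP => k i; rewrite !mxE colsum_block_spread ord1.
by move=> k _; rewrite /block_spread mxcolK bformZ bform_centered_block_const mulr0.
Qed.

Lemma psd_blockavg : psd A -> psd (blockavg A).
Proof.
move=> [symA psdA]; split; first exact: sym_blockavg.
by move=> t; have := psdA (block_spread t); rewrite -/(bform _ _ _) bform_block_spread.
Qed.

Lemma pd_blockavg : pd A -> pd (blockavg A).
Proof.
move=> [symA pdA]; split; first exact: sym_blockavg.
move=> t t_neq0; have := pdA (block_spread t); rewrite block_spread_eq0.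
by rewrite -/(bform _ _ _) bform_block_spread; apply.
Qed.

Lemma psd_inBp : psd (blockavg A) -> psd A.
Proof.
move=> [_ psd_avg]; split => [|x]; first exact: A_Bp.1.
rewrite -/(bform _ _ _) bform_inBp addr_ge0 ?psd_avg //.
by apply: sumr_ge0 => k _; apply: psd_centered_block.
Qed.

Lemma pd_inBp : pd (blockavg A) -> (forall k, pd (submxblock A k k)) -> pd A.
Proof.
move=> [_ pd_avg] pd_blocks; split => [|x x_neq0]; first exact: A_Bp.1.
rewrite -/(bform _ _ _) bform_inBp; set s := \col_k _.
have sum_ge0 (P : pred 'I_p) :
    0 <= \sum_(k | P k) bform (submxcol x k) (centered_block A k) (submxcol x k).
  by apply: sumr_ge0 => k _; apply: psd_centered_block.
have [s0|s_neq0] := eqVneq s 0; last first.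
  by have := pd_avg s s_neq0; rewrite -/(bform _ _ _); have := sum_ge0 predT; lra.
have [k xk_neq0] := mxcol_neq0 x_neq0.
have sk0 : colsum (submxcol x k) = 0.
  by have := congr1 (fun m : 'cV[R]_p => m k 0) s0; rewrite !mxE.
have : 0 < bform (submxcol x k) (centered_block A k) (submxcol x k).
  by rewrite bform_centered_block sk0 !mulr0 subr0; apply: (pd_blocks k).2.
by rewrite s0 bform0l addr0 (bigD1 k) //=; have := sum_ge0 (predC1 k); lra.
Qed.

End InBp.
End PositiveBlockSizes.
End BlockMatrices.

Unset Implicit Arguments. Set Strict Implicit.

Theorem theorem1 (R : realFieldType) (p : nat) (nk : 'I_p -> nat)
  (hp : (0 < p)%N) (hnk : forall k : 'I_p, (0 < nk k)%N)
  (A : 'M[R]_(\sum_(k < p) nk k)) (hA : inBp A) :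
  (psd A <-> psd (blockavg A) /\ (forall k : 'I_p, psd (submxblock A k k))) /\
  (pd A <-> pd (blockavg A) /\ (forall k : 'I_p, pd (submxblock A k k))).
Proof.
split; split.
- by move=> psdA; split; [exact: psd_blockavg | move=> k; exact: psd_submxblock_diag].
- by move=> [psd_avg _]; exact: psd_inBp.
- by move=> pdA; split; [exact: pd_blockavg | move=> k; exact: pd_submxblock_diag].
- by move=> [pd_avg pd_blocks]; exact: pd_inBp.
Qed.
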